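(* Let $M^4$ be a smooth $4$-manifold, $\sigma$ a smooth non-constant function on $M^4$ with $\sigma_i:=\partial\sigma/\partial x^i$, $\sigma_{ij}:=\partial^2\sigma/\partial x^i\partial x^j$, and $h_{11}(t)>0$ a Riemannian metric on $\mathbb{R}$. On the domain of $J^{1*}(\mathbb{R},M^4)$ where $\mathcal{P}^{1111}:=p^1_1p^1_2p^1_3p^1_4>0$, consider $\overset{*}{H}=4e^{-2\sigma(x)}h_{11}(t)[\mathcal{P}^{1111}]^{1/2}$ and its Cartan canonical connection with components $H^i_{jk}=4\delta^i_j\delta^i_k\sigma_i$, $C^{j(k)}_{i(1)}=\mathsf{C}^{jk}_i\frac{p^1_i}{p^1_jp^1_k}$ (no sums), $\mathsf{C}^{jk}_i=\frac{1-2\delta^{jk}-2\delta^j_i-2\delta^k_i+8\delta^j_i\delta^k_i}{8}$. Then the Ricci d-tensors $$R_{ij}:=\frac{\delta H^m_{ij}}{\delta x^m}-\frac{\delta H^m_{im}}{\delta x^j}+H^r_{ij}H^m_{rm}-H^r_{im}H^m_{rj}+C^{m(r)}_{i(1)}R^{(1)}_{(r)jm},\qquad S^{(i)(j)}_{(1)(1)}:=\frac{\partial C^{i(j)}_{m(1)}}{\partial p^1_m}-\frac{\partial C^{i(m)}_{m(1)}}{\partial p^1_j}+C^{r(j)}_{m(1)}C^{i(m)}_{r(1)}-C^{r(m)}_{m(1)}C^{i(j)}_{r(1)}$$ (summation over $m,r$) are given by (no sums over $i,j,k,l$) $$R_{ij}=\begin{cases}-2\sigma_{ij}-\dfrac{p^1_i}{p^1_k}\sigma_{jk}-\dfrac{p^1_i}{p^1_l}\sigma_{jl},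 & i\neq j,\ \{i,j,k,l\}=\{1,2,3,4\},\\[2mm] 0,& i=j,\end{cases}\qquad R^{(i)(j)}_{(1)(1)}=-S^{(i)(j)}_{(1)(1)}=\frac{4\delta^{ij}-1}{8}\frac{1}{p^1_ip^1_j}.$$
   Context: The nonlinear connection is $\underset{2}{N}{}^{(1)}_{(i)j}=-4\sigma_ip^1_i\delta_{ij}$ (no sum), with adapted vector fields $\frac{\delta}{\delta x^i}=\frac{\partial}{\partial x^i}+4\sigma_ip^1_i\frac{\partial}{\partial p^1_i}$ (no sum over $i$). The torsion d-tensor is $R^{(1)}_{(r)ij}=\frac{\delta \underset{2}{N}{}^{(1)}_{(r)i}}{\delta x^j}-\frac{\delta \underset{2}{N}{}^{(1)}_{(r)j}}{\delta x^i}$. Here $R^{(i)(j)}_{(1)(1)}$ denotes the vertical Ricci d-tensor of the Cartan canonical connection, which equals $-S^{(i)(j)}_{(1)(1)}$. *)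

From HB Require Import structures.
From mathcomp Require Import all_boot all_order all_algebra.
From mathcomp Require Import all_classical all_reals all_analysis.
Set Implicit Arguments. Unset Strict Implicit. Unset Printing Implicit Defensive.
Import Order.TTheory GRing.Theory Num.Theory.
Import numFieldNormedType.Exports.
Local Open Scope classical_set_scope.
Local Open Scope ring_scope.

Section Defs.
Variable R : realType.
Notation V := 'rV[R]_4.

Definition kd (i j : 'I_4) : R := if i == j then 1 else 0.

Definition pd (i : 'I_4) (f : V -> R) (x : V) : R := 'D_(delta_mx 0 i) f x.

Fixpoint iter_pd (l : seq 'I_4) (f : V -> R) : V -> R :=
  if l is i :: l' then pd i (iter_pd l' f) else f.

Definition smooth_on (U : set V) (f : V -> R) : Prop :=
  forall (l : seq 'I_4) (x : V), U x -> differentiable (iter_pd l f) x.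

Variable sigma : V -> R.

Definition sig1 (i : 'I_4) (x : V) : R := pd i sigma x.
Definition sig2 (i j : 'I_4) (x : V) : R := pd i (pd j sigma) x.

(* d-tensors are functions of (x, p), x in M^4 (chart), p = (p^1_i) *)
(* nonlinear connection N^(1)_(i)j = -4 sigma_i p^1_i delta_ij *)
Definition Nc (i j : 'I_4) (x p : V) : R := - 4 * sig1 i x * p 0 i * kd i j.

Definition deltaX (i : 'I_4) (F : V -> V -> R) (x p : V) : R :=
  pd i (fun y => F y p) x + 4 * sig1 i x * p 0 i * pd i (fun q => F x q) p.

Definition dP (i : 'I_4) (F : V -> V -> R) (x p : V) : R := pd i (fun q => F x q) p.

Definition Rtor (r i j : 'I_4) (x p : V) : R :=
  deltaX j (Nc r i) x p - deltaX i (Nc r j) x p.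

Definition Hc (i j k : 'I_4) (x p : V) : R := 4 * kd i j * kd i k * sig1 i x.

Definition Cs (i j k : 'I_4) : R :=
  (1 - 2 * kd j k - 2 * kd j i - 2 * kd k i + 8 * kd j i * kd k i) / 8.

(* C^{j(k)}_{i(1)} = Cs^{jk}_i p_i / (p_j p_k) *)
Definition Cc (j k i : 'I_4) (x p : V) : R := Cs i j k * p 0 i / (p 0 j * p 0 k).

Definition RicH (i j : 'I_4) (x p : V) : R :=
  \sum_(m < 4) deltaX m (Hc m i j) x p
  - \sum_(m < 4) deltaX j (Hc m i m) x p
  + \sum_(r < 4) \sum_(m < 4) Hc r i j x p * Hc m r m x p
  - \sum_(r < 4) \sum_(m < 4) Hc r i m x p * Hc m r j x p
  + \sum_(m < 4) \sum_(r < 4) Cc m r i x p * Rtor r j m x p.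

Definition Svert (i j : 'I_4) (x p : V) : R :=
  \sum_(m < 4) dP m (Cc i j m) x p
  - \sum_(m < 4) dP j (Cc i m m) x p
  + \sum_(m < 4) \sum_(r < 4) Cc r j m x p * Cc i m r x p
  - \sum_(m < 4) \sum_(r < 4) Cc r m m x p * Cc i j r x p.

Definition RicV (i j : 'I_4) (x p : V) : R := - Svert i j x p.

End Defs.

Definition Hstar (R : realType) (sigma : 'rV[R]_4 -> R) (h : R -> R)
  (t : R) (x p : 'rV[R]_4) : R :=
  4 * expR (- 2 * sigma x) * h t * Num.sqrt (\prod_(i < 4) p 0 i).

(* The horizontal tensor reduces to two facts. First, sigma_ij = sigma_ji: for the
   smooth sigma this is the Clairaut-Schwarz theorem, obtained by writing the second
   difference of sigma over a small square as h^2 times a mixed partial derivative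
   in two ways (mean value theorem twice) and letting h -> 0.  Second, the torsion
   simplifies to R^(1)_(r)jm = 4 p_r (delta_rm sigma_jr - delta_rj sigma_mr), so the
   Kronecker deltas collapse the double sum to
   4 p_i sum_m (C^{mm}_i sigma_jm - C^{mj}_i sigma_mj) / p_m, while the two quadratic
   H-terms cancel term by term.  The vertical tensor is a rational identity in the
   p^1_i, checked for each pair (i, j). *)

From HB Require Import structures.
From mathcomp Require Import all_boot all_order all_algebra.
From mathcomp Require Import all_classical all_reals all_analysis.
From mathcomp Require Import ring.
Set Implicit Arguments.
Unset Strict Implicit.
Unset Printing Implicit Defensive.

Import Order.TTheory GRing.Theory Num.Theory.
Import numFieldNormedType.Exports.
Local Open Scope classical_set_scope.
Local Open Scope ring_scope.

Section Clairaut.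
Variables (R : realType) (V : normedModType R).

Lemma is_derive_line (f : V -> R) (z w : V) (s : R) :
  derivable f (z + s *: w) w ->
  is_derive s 1 (fun t : R => f (z + t *: w)) ('D_w f (z + s *: w)).
Proof.
have E : (fun h : R => h^-1 *: (((fun t : R => f (z + t *: w)) \o shift s) (h *: 1)
             - f (z + s *: w))) =
         (fun h : R => h^-1 *: ((f \o shift (z + s *: w)) (h *: w) - f (z + s *: w))).
  apply/funext => h /=; congr (_ *: (f _ - _)).
  by rewrite [h *: (1 : R)]mulr1 scalerDl addrCA addrA [X in X + _]addrC.
move=> df; split; first by rewrite /derivable E.
by rewrite /derive E.
Qed.

Lemma MVT_is_derive (phi dphi : R -> R) (h : R) : 0 < h ->
  (forall s, 0 <= s <= h -> is_derive s 1 phi (dphi s)) ->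
  exists2 c, 0 < c < h & phi h - phi 0 = dphi c * h.
Proof.
move=> h0 dphiP.
have phi_cont : {within `[0, h], continuous phi}.
  apply: continuous_in_subspaceT => s; rewrite inE /= in_itv /= => /dphiP [dphi_s _].
  exact/differentiable_continuous/derivable1_diffP.
have dphi_open s : s \in `]0, h[ -> is_derive s 1 phi (dphi s).
  by rewrite in_itv /= => /andP[/ltW s0 /ltW sh]; apply: dphiP; rewrite s0 sh.
have [c] := MVT h0 dphi_open phi_cont.
by rewrite in_itv subr0 => c_itv ->; exists c.
Qed.

Lemma second_difference_MVT (f : V -> R) (u v x : V) (h : R) : 0 < h ->
  (forall s t, 0 <= s <= h -> 0 <= t <= h ->
     derivable f (x + s *: u + t *: v) u /\
     derivable ('D_u f) (x + s *: u + t *: v) v) ->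
  exists c1 c2, [/\ 0 <= c1 <= h, 0 <= c2 <= h &
    f (x + h *: u + h *: v) - f (x + h *: u) - f (x + h *: v) + f x =
    'D_v ('D_u f) (x + c1 *: u + c2 *: v) * h * h].
Proof.
move=> h0 df.
have h_itv : 0 <= h <= h by rewrite ltW /=.
have z_itv : (0 : R) <= 0 <= h by rewrite lexx ltW.
have df_u s t sI tI := (df s t sI tI).1.
have df_uv s t sI tI := (df s t sI tI).2.
have df_hv s (sI : 0 <= s <= h) : derivable f (x + h *: v + s *: u) u.
  by rewrite addrAC; exact: df_u sI h_itv.
have df_0 s (sI : 0 <= s <= h) : derivable f (x + s *: u) u.
  by have := df_u s 0 sI z_itv; rewrite scale0r addr0.
have [c1 /andP[c10 c1h]] := @MVT_is_derive
  (fun s => f (x + h *: v + s *: u) - f (x + s *: u))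
  (fun s => 'D_u f (x + h *: v + s *: u) - 'D_u f (x + s *: u)) h h0
  (fun s sI => is_deriveB (is_derive_line (df_hv s sI)) (is_derive_line (df_0 s sI))).
rewrite /= !scale0r !addr0 => E1.
have c1_itv : 0 <= c1 <= h by rewrite !ltW.
have [c2 /andP[c20 c2h]] := @MVT_is_derive
  (fun t => 'D_u f (x + c1 *: u + t *: v))
  (fun t => 'D_v ('D_u f) (x + c1 *: u + t *: v)) h h0
  (fun t tI => is_derive_line (df_uv c1 t c1_itv tI)).
rewrite /= scale0r addr0 => E2.
exists c1, c2; split => //; first by rewrite !ltW.
rewrite -E2 -[x + c1 *: u + h *: v]addrAC -E1 [x + h *: v + h *: u]addrAC.
ring.
Qed.

Lemma mixed_derive_eq_near (f : V -> R) (u v x : V) (d : R) : 0 < d ->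
  (forall y, `|x - y| < d -> [/\ derivable f y u, derivable f y v,
                                derivable ('D_u f) y v & derivable ('D_v f) y u]) ->
  exists y1 y2, [/\ `|x - y1| < d, `|x - y2| < d &
                    'D_v ('D_u f) y1 = 'D_u ('D_v f) y2].
Proof.
move=> d0 df.
have K1 : 0 < `|u| + `|v| + 1 by rewrite ltr_wpDl // addr_ge0.
have [h h0 hd] : exists2 h : R, 0 < h & h * (`|u| + `|v|) < d.
  exists (d / (`|u| + `|v| + 1)); first by rewrite divr_gt0.
  by rewrite mulrAC ltr_pdivrMr // ltr_pM2l // ltrDl.
have box s t : 0 <= s <= h -> 0 <= t <= h -> `|x - (x + s *: u + t *: v)| < d.
  move=> /andP[s0 sh] /andP[t0 th].
  rewrite -addrA opprD addrA subrr sub0r normrN.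
  apply: le_lt_trans (ler_normD _ _) _; rewrite !normrZ !ger0_norm //.
  by apply: le_lt_trans hd; rewrite mulrDr lerD // ler_wpM2r.
have df_uv s t (sI : 0 <= s <= h) (tI : 0 <= t <= h) :
    derivable f (x + s *: u + t *: v) u /\ derivable ('D_u f) (x + s *: u + t *: v) v.
  by have [] := df _ (box s t sI tI).
have df_vu s t (sI : 0 <= s <= h) (tI : 0 <= t <= h) :
    derivable f (x + s *: v + t *: u) v /\ derivable ('D_v f) (x + s *: v + t *: u) u.
  by rewrite addrAC; have [] := df _ (box t s tI sI).
have [a1 [a2 [a1I a2I Ea]]] := second_difference_MVT h0 df_uv.
have [b1 [b2 [b1I b2I Eb]]] := second_difference_MVT h0 df_vu.
exists (x + a1 *: u + a2 *: v), (x + b1 *: v + b2 *: u); split.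
- exact: box.
- by rewrite addrAC; apply: box.
have hh : h * h != 0 by rewrite mulf_neq0 // gt_eqF.
have sym_difference : f (x + h *: u + h *: v) - f (x + h *: u) - f (x + h *: v) + f x =
    f (x + h *: v + h *: u) - f (x + h *: v) - f (x + h *: u) + f x.
  by rewrite [x + h *: v + h *: u]addrAC; ring.
have cancel_hh (A B : R) : A * h * h = B * h * h -> A = B.
  by move=> E; apply: (mulIf hh); rewrite /= !mulrA.
exact: cancel_hh (etrans (esym Ea) (etrans sym_difference Eb)).
Qed.

Lemma derive_comm (f : V -> R) (u v : V) (U : set V) (x : V) : open U -> U x ->
  (forall y, U y -> [/\ derivable f y u, derivable f y v,
                        derivable ('D_u f) y v & derivable ('D_v f) y u]) ->
  {for x, continuous ('D_v ('D_u f))} -> {for x, continuous ('D_u ('D_v f))} ->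
  'D_v ('D_u f) x = 'D_u ('D_v f) x.
Proof.
move=> oU Ux df Duv_cont Dvu_cont.
apply/eqP; rewrite -subr_eq0 -normr_le0; apply/ler_addgt0Pr => e e0; rewrite add0r.
have e2 : 0 < e / 2 by rewrite divr_gt0.
have [d1 d1_0 U_d1] : nbhs_ball x U by apply/nbhs_ballP/open_nbhs_nbhs.
have /cvgrPdist_lt /(_ _ e2) /nbhs_ballP [d2 d2_0 Duv_d2] := Duv_cont.
have /cvgrPdist_lt /(_ _ e2) /nbhs_ballP [d3 d3_0 Dvu_d3] := Dvu_cont.
pose d := Num.min d1 (Num.min d2 d3).
have d0 : 0 < d by rewrite !lt_min d1_0 d2_0 d3_0.
have near_x y : `|x - y| < d -> [/\ U y,
    `|'D_v ('D_u f) x - 'D_v ('D_u f) y| < e / 2 &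
    `|'D_u ('D_v f) x - 'D_u ('D_v f) y| < e / 2].
  rewrite !lt_min => /and3P[xy1 xy2 xy3].
  by split; [apply: U_d1 | apply: Duv_d2 | apply: Dvu_d3]; rewrite -ball_normE.
have df_near y : `|x - y| < d -> [/\ derivable f y u, derivable f y v,
    derivable ('D_u f) y v & derivable ('D_v f) y u].
  by move=> /near_x [Uy _ _]; exact: df.
have [y1 [y2 [xy1 xy2 Duv_Dvu]]] := mixed_derive_eq_near d0 df_near.
have [_ Duv_y1 _] := near_x _ xy1.
have [_ _ Dvu_y2] := near_x _ xy2.
rewrite -Duv_Dvu distrC in Dvu_y2.
apply: le_trans (ler_distD ('D_v ('D_u f) y1) _ _) _.
by rewrite [e]splitr; apply/ltW/ltrD; [exact: Duv_y1 | exact: Dvu_y2].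
Qed.

End Clairaut.

Definition o0 : 'I_4 := @Ordinal 4 0 isT.
Definition o1 : 'I_4 := @Ordinal 4 1 isT.
Definition o2 : 'I_4 := @Ordinal 4 2 isT.
Definition o3 : 'I_4 := @Ordinal 4 3 isT.

Lemma ord4P (i : 'I_4) : [\/ i = o0, i = o1, i = o2 | i = o3].
Proof.
by case: i => [[|[|[|[|//]]]] ?]; [apply: Or41 | apply: Or42 | apply: Or43 | apply: Or44];
  apply: val_inj.
Qed.

Section Coordinates.
Variable R : realType.
Notation V := 'rV[R]_4.

Lemma big_ord4 (F : 'I_4 -> R) : \sum_(m < 4) F m = F o0 + F o1 + F o2 + F o3.
Proof.
rewrite !big_ord_recr big_ord0 /= add0r.
by congr (_ + _ + _ + _); congr F; apply: val_inj.
Qed.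

Lemma big_ord4_uniq (F : 'I_4 -> R) (i j k l : 'I_4) : uniq [:: i; j; k; l] ->
  \sum_(m < 4) F m = F i + F j + F k + F l.
Proof.
move=> ijkl_uniq.
have [_ ijkl_full] : (size [:: i; j; k; l] = size (enum 'I_4)) * ([:: i; j; k; l] =i enum 'I_4).
  by apply: uniq_min_size => [//|m _|]; rewrite ?mem_enum ?size_enum_ord.
rewrite (eq_bigl [in [:: i; j; k; l]]) => [|m]; last by rewrite ijkl_full mem_enum.
by rewrite -big_uniq // !big_cons big_nil /= !addrA addr0.
Qed.

Lemma kdxx (i : 'I_4) : kd R i i = 1.
Proof. by rewrite /kd eqxx. Qed.

Lemma kd_neq (i j : 'I_4) : i != j -> kd R i j = 0.
Proof. by rewrite /kd => /negbTE ->. Qed.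

Lemma big_kd (F : 'I_4 -> R) (i : 'I_4) : \sum_(m < 4) kd R m i * F m = F i.
Proof.
rewrite (bigD1 i) //= kdxx mul1r big1 ?addr0 // => m mi.
by rewrite kd_neq ?mul0r.
Qed.

Lemma pd_coord (i r : 'I_4) (q : V) : pd i (fun q : V => q 0 r) q = kd R r i.
Proof.
have coord_lin : linear (fun q : V => q 0 r) by move=> a y z; rewrite !mxE.
pose L : {linear V -> R} :=
  HB.pack (fun q : V => q 0 r) (GRing.isLinear.Build _ _ _ _ _ coord_lin).
rewrite /pd (_ : (fun q : V => q 0 r) = L) // deriveE; last first.
  exact/linear_differentiable/coord_continuous.
rewrite diff_lin /=; last exact: coord_continuous.
by rewrite mxE /kd eqxx /=; case: (r == i).
Qed.

Lemma pd_Cc (j k i m : 'I_4) (x p : V) : p 0 j != 0 -> p 0 k != 0 ->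
  dP m (Cc j k i) x p =
  Cs R i j k * (kd R i m - p 0 i * (kd R j m / p 0 j + kd R k m / p 0 k)) / (p 0 j * p 0 k).
Proof.
move=> pj0 pk0.
have d_coord r : derivable (fun q : V => q 0 r) p (delta_mx 0 m).
  exact/diff_derivable/differentiable_coord.
have D_coord r : 'D_(delta_mx 0 m) (fun q : V => q 0 r) p = kd R r m := pd_coord m r p.
pose den := (fun q : V => q 0 j) * (fun q : V => q 0 k).
have d_den : derivable den p (delta_mx 0 m) := derivableM (d_coord j) (d_coord k).
have den0 : den p != 0 by rewrite mulf_neq0.
have d_num : derivable (fun q : V => Cs R i j k * q 0 i) p (delta_mx 0 m).
  exact: derivableM (derivable_cst _ _ _) (d_coord i).
have D_num : 'D_(delta_mx 0 m) (fun q : V => Cs R i j k * q 0 i) p = Cs R i j k * kd R i m.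
  by rewrite (deriveMl _ (d_coord i)) D_coord.
have D_den : 'D_(delta_mx 0 m) den p = p 0 j * kd R k m + p 0 k * kd R j m.
  by rewrite (deriveM (d_coord j) (d_coord k)) !D_coord.
rewrite /dP /Cc; apply: etrans (deriveM d_num (derivableV den0 d_den)) _.
have den_p : den p = p 0 j * p 0 k by [].
rewrite deriveV // D_num D_den /GRing.scale /= den_p.
by field; rewrite pj0 pk0.
Qed.

End Coordinates.

Section RicciTensors.
Variables (R : realType) (sigma : 'rV[R]_4 -> R) (x p : 'rV[R]_4).
Hypothesis sig1_differentiable : forall a : 'I_4, differentiable (sig1 sigma a) x.
Hypothesis sig2_sym : forall a b : 'I_4, sig2 sigma a b x = sig2 sigma b a x.
Hypothesis p_neq0 : forall a : 'I_4, p 0 a != 0.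

Lemma deltaX_Hc (m a i j : 'I_4) :
  deltaX sigma m (Hc sigma a i j) x p = 4 * kd R a i * kd R a j * sig2 sigma m a x.
Proof.
rewrite /deltaX /Hc /pd deriveMl; last exact/diff_derivable.
by rewrite (derive_cst (4 * kd R a i * kd R a j * sig1 sigma a x)) mulr0 addr0.
Qed.

Lemma RtorE (r j m : 'I_4) : Rtor sigma r j m x p =
  kd R r m * (4 * p 0 r * sig2 sigma j r x) - kd R r j * (4 * p 0 r * sig2 sigma m r x).
Proof.
have pd_Nc_x a b : pd a (fun y => Nc sigma r b y p) x =
    - 4 * p 0 r * kd R r b * sig2 sigma a r x.
  rewrite /Nc (_ : (fun y => _) = fun y => - 4 * p 0 r * kd R r b * sig1 sigma r y).
    by rewrite /pd deriveMl; last exact/diff_derivable.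
  by apply/funext => y; ring.
have pd_Nc_p a b : pd a (fun q => Nc sigma r b x q) p =
    - 4 * sig1 sigma r x * kd R r b * kd R r a.
  rewrite /Nc (_ : (fun q => _) = fun q : 'rV[R]_4 => - 4 * sig1 sigma r x * kd R r b * q 0 r).
    rewrite /pd deriveMl; last exact/diff_derivable/differentiable_coord.
    by rewrite -/(pd a _ p) pd_coord.
  by apply/funext => q; ring.
rewrite /Rtor /deltaX !pd_Nc_x !pd_Nc_p.
(* Generalizing the partial derivatives stops [ring] and [rewrite] from unfolding
   them into limits while comparing terms. *)
move: (sig1 sigma) (sig2 sigma) => s1 s2.
by rewrite /kd; case: (eqVneq r j) => [<-|_]; case: (eqVneq r m) => [<-|_];
  rewrite ?eqxx; ring.
Qed.

Lemma Hc_mul_swap (r m i j : 'I_4) :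
  Hc sigma r i j x p * Hc sigma m r m x p = Hc sigma r i m x p * Hc sigma m r j x p.
Proof.
rewrite /Hc; move: (sig1 sigma) => s1.
by rewrite /kd; case: (eqVneq m r) => [->|_]; rewrite ?eqxx; ring.
Qed.

Lemma RicHE (i j : 'I_4) : RicH sigma i j x p =
  4 * kd R i j * sig2 sigma i i x - 4 * sig2 sigma j i x
  + \sum_(m < 4) 4 * p 0 i * (Cs R i m m * sig2 sigma j m x
                             - Cs R i m j * sig2 sigma m j x) / p 0 m.
Proof.
have trace_term : \sum_(m < 4) deltaX sigma m (Hc sigma m i j) x p =
    4 * kd R i j * sig2 sigma i i x.
  rewrite -(big_kd (fun m => 4 * kd R m j * sig2 sigma m m x)).
  by apply: eq_bigr => m _; rewrite deltaX_Hc; move: (sig2 sigma) => s2; ring.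
have contracted_term : \sum_(m < 4) deltaX sigma j (Hc sigma m i m) x p =
    4 * sig2 sigma j i x.
  transitivity (\sum_(m < 4) kd R m i * (4 * kd R m m * sig2 sigma j m x)).
    by apply: eq_bigr => m _; rewrite deltaX_Hc; move: (sig2 sigma) => s2; ring.
  rewrite (big_kd (fun m => 4 * kd R m m * sig2 sigma j m x)) kdxx.
  by move: (sig2 sigma) => s2; ring.
have torsion_term m : \sum_(r < 4) Cc m r i x p * Rtor sigma r j m x p =
    4 * p 0 i * (Cs R i m m * sig2 sigma j m x - Cs R i m j * sig2 sigma m j x) / p 0 m.
  under eq_bigr => r _ do rewrite RtorE.
  move: (sig2 sigma) => s2.
  under eq_bigr => r _ do rewrite mulrBr !(mulrCA (Cc _ _ _ _ _)).
  rewrite sumrB !big_kd /Cc.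
  by field; rewrite !p_neq0.
rewrite /RicH trace_term contracted_term (eq_bigr _ (fun r _ => eq_bigr _
  (fun m _ => Hc_mul_swap r m i j))) addrK.
by congr (_ + _); apply: eq_bigr => m _; rewrite torsion_term.
Qed.

Lemma RicH_diag (i : 'I_4) : RicH sigma i i x p = 0.
Proof.
rewrite RicHE big1 => [|m _]; last first.
  have -> : Cs R i m i = Cs R i m m.
    by rewrite /Cs /kd; case: (eqVneq m i) => [->|_]; rewrite ?eqxx; ring.
  by rewrite (sig2_sym m i); move: (sig2 sigma) => s2; rewrite subrr mulr0 mul0r.
by rewrite kdxx; move: (sig2 sigma) => s2; ring.
Qed.

Lemma RicH_offdiag (i j k l : 'I_4) :
  [&& i != j, k != i, k != j, l != i, l != j & l != k] ->
  RicH sigma i j x p = - 2 * sig2 sigma i j x - p 0 i / p 0 k * sig2 sigma j k x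
                       - p 0 i / p 0 l * sig2 sigma j l x.
Proof.
case/and5P => ij ki kj li /andP[lj lk].
have [ji ik jk] : [/\ j != i, i != k & j != k] by split; rewrite eq_sym.
have [il jl kl] : [/\ i != l, j != l & k != l] by split; rewrite eq_sym.
have ijkl_uniq : uniq [:: i; j; k; l].
  by rewrite /= !inE !negb_or ij ik il jk jl kl.
rewrite RicHE (big_ord4_uniq _ ijkl_uniq) (sig2_sym j i) /Cs !kdxx !kd_neq //.
rewrite (sig2_sym k j) (sig2_sym l j); move: (sig2 sigma) => s2.
by field; rewrite !p_neq0.
Qed.

Lemma oppSvertE (i j : 'I_4) :
  - Svert i j x p = (4 * kd R i j - 1) / 8 * (1 / (p 0 i * p 0 j)).
Proof.
rewrite /Svert (eq_bigr _ (fun m _ => pd_Cc m m x (p_neq0 i) (p_neq0 j))).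
rewrite (eq_bigr _ (fun m _ => pd_Cc m j x (p_neq0 i) (p_neq0 m))).
rewrite !big_ord4 /Cc.
by case: (ord4P i) => ->; case: (ord4P j) => ->; rewrite /Cs /kd /=;
  field; rewrite !p_neq0.
Qed.

End RicciTensors.

Theorem mainTheorem3 (R : realType) (U : set 'rV[R]_4) (sigma : 'rV[R]_4 -> R)
  (h : R -> R) (t : R) (x p : 'rV[R]_4) :
  open U -> smooth_on U sigma ->
  ~ (exists c : R, forall y, U y -> sigma y = c) ->
  (forall s : R, 0 < h s) ->
  U x -> 0 < \prod_(i < 4) p 0 i ->
  (forall i j k l : 'I_4,
     [&& i != j, k != i, k != j, l != i, l != j & l != k] ->
     RicH sigma i j x p =
       - 2 * sig2 sigma i j x - p 0 i / p 0 k * sig2 sigma j k x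
       - p 0 i / p 0 l * sig2 sigma j l x)
  /\ (forall i : 'I_4, RicH sigma i i x p = 0)
  /\ (forall i j : 'I_4,
        RicV i j x p = - Svert i j x p /\
        - Svert i j x p = (4 * kd R i j - 1) / 8 * (1 / (p 0 i * p 0 j))).
Proof.
(* Non-constancy of sigma and positivity of h only make H* a genuine Hamiltonian. *)
move=> U_open sigma_smooth _ _ Ux p_pos.
have sig1_diff a : differentiable (sig1 sigma a) x := sigma_smooth [:: a] x Ux.
have p_neq0 a : p 0 a != 0 by move: (lt0r_neq0 p_pos) => /prodf_neq0; apply.
have smooth_derivable l y v : U y -> derivable (iter_pd l sigma) y v.
  by move=> Uy; apply/diff_derivable/sigma_smooth.
have sig2_sym a b : sig2 sigma a b x = sig2 sigma b a x.
  apply: (derive_comm U_open Ux).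
  - move=> y Uy; split.
    + exact: (smooth_derivable [::] y _ Uy).
    + exact: (smooth_derivable [::] y _ Uy).
    + exact: (smooth_derivable [:: b] y _ Uy).
    + exact: (smooth_derivable [:: a] y _ Uy).
  - exact: differentiable_continuous (sigma_smooth [:: a; b] x Ux).
  - exact: differentiable_continuous (sigma_smooth [:: b; a] x Ux).
split; [|split].
- exact: RicH_offdiag sig1_diff sig2_sym p_neq0.
- exact: RicH_diag sig1_diff sig2_sym p_neq0.
- by move=> i j; split=> //; apply: oppSvertE.
Qed.
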